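(* Let $k\ge1$, $i\in\{1,\dots,k\}$, and let $s_i^k$ be the $i$-th row of $G_k^\alpha$. For every $j\in\{0,1,\dots,s-1\}$, the vector $\gamma^js_i^k$ contains every element of the ideal $\langle\gamma^j\rangle$ exactly $q^{j+s(k-1)}$ times among its coordinates.
   Context: Let $R$ be a finite commutative chain ring with maximal ideal $\langle\gamma\rangle$, nilpotency index $s$ (least $s$ with $\gamma^s=0$) and residue field $R/\langle\gamma\rangle\cong\mathbb{F}_q$. Fix coset representatives $T=\{e_0,\dots,e_{q-1}\}$ with $e_0=0,e_1=1$, ordered $e_0<\dots<e_{q-1}$; each $r\in R$ is uniquely $\sum_{i=0}^{s-1}r_i\gamma^i$, $r_i\in T$; order $R$ by $x>y$ iff $x_i>y_i$ in $T$ for the largest $i$ with $x_i\neq y_i$; list $R=\{\rho_0,\dots,\rho_{q^s-1}\}$ increasingly. $\mathbf{a}^{(m)}$ is the constant vector of length $m$. Define $G_1^\alpha=(\rho_0\ \cdots\ \rho_{q^s-1})$ and, for $k>1$, $G_k^\alpha$ as the $k\times q^{sk}$ matrix of $q^s$ column blocks, the $j$-th having first row $\boldsymbol{\rho_j}^{(q^{s(k-1)})}$ and $G_{k-1}^\alpha$ below. *)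

From HB Require Import structures.
From mathcomp Require Import all_boot all_order all_algebra.
Set Implicit Arguments. Unset Strict Implicit. Unset Printing Implicit Defensive.
Import GRing.Theory.
Local Open Scope ring_scope.

Section ChainRing.
Variable R : finComNzRingType.

Definition is_ideal (I : {set R}) : bool :=
  [&& (0 : R) \in I,
      [forall x in I, [forall y in I, x + y \in I]] &
      [forall r : R, [forall x in I, r * x \in I]]].

Definition pideal (a : R) : {set R} := [set a * r | r : R].

Definition chain_ring : Prop :=
  forall I J : {set R}, is_ideal I -> is_ideal J -> I \subset J \/ J \subset I.

Definition maximal_ideal (M : {set R}) : Prop :=
  [/\ is_ideal M, M != [set: R] &
      forall J : {set R}, is_ideal J -> M \subset J -> J = M \/ J = [set: R]].

Definition nilpotency_index (g : R) (s : nat) : Prop :=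
  g ^+ s = 0 /\ forall m, (m < s)%N -> g ^+ m != 0.

Definition coset_reps (g : R) (q : nat) (e : nat -> R) : Prop :=
  (forall r : R, exists2 t, (t < q)%N & r - e t \in pideal g) /\
  (forall t t', (t < q)%N -> (t' < q)%N -> e t - e t' \in pideal g -> t = t').

(* rho_n : the n-th element of R in the increasing order; n written in base q
   with digits n_i = (n / q^i) mod q, rho_n = sum_{i<s} e_{n_i} g^i *)
Definition rho (g : R) (s q : nat) (e : nat -> R) (n : nat) : R :=
  \sum_(i < s) e ((n %/ q ^ i) %% q)%N * g ^+ i.

(* entry (i, c) (0-based) of G_k^alpha *)
Fixpoint Gent (g : R) (s q : nat) (e : nat -> R) (k i c : nat) : R :=
  match k with
  | 0 => 0
  | k'.+1 => if i == 0%N then rho g s q e (c %/ q ^ (s * k'))%N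
             else Gent g s q e k' i.-1 (c %% q ^ (s * k'))%N
  end.

Definition Galpha (g : R) (s q : nat) (e : nat -> R) (k : nat)
  : 'M[R]_(k, q ^ (s * k)) :=
  \matrix_(i < k, c < q ^ (s * k)) Gent g s q e k i c.

End ChainRing.

From HB Require Import structures.
From mathcomp Require Import all_boot all_order all_algebra.
Set Implicit Arguments.
Unset Strict Implicit.
Unset Printing Implicit Defensive.
Import GRing.Theory.

(* Because of its block structure, every row of G_k lists each rho_m, hence each
   element of R, exactly q^(s(k-1)) times, so it suffices to count the r in R with
   gamma^j r = x.  In gamma-adic digits, multiplication by gamma^j shifts the digits
   up by j and drops the top j of them (gamma^s = 0).  By uniqueness of expansions,
   gamma^j r = gamma^j y holds iff r and y share their s - j lowest digits, which
   leaves q^j choices for r. *)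

Lemma big_ord_mul (R : Type) (idx : R) (op : Monoid.law idx) (F : nat -> R) a b :
  \big[op/idx]_(c < a * b) F c =
  \big[op/idx]_(u < a) \big[op/idx]_(v < b) F (u * b + v).
Proof.
elim: a => [|a IHa]; first by rewrite mul0n !big_ord0.
by rewrite mulSnr big_split_ord IHa big_ord_recr.
Qed.

Lemma card_ord_geq n m : #|[pred t : 'I_n | m <= t]| = n - m.
Proof.
rewrite -sum1_card -[n - m]muln1 -sum_nat_const_nat big_geq_mkord.
by apply: eq_bigl => t.
Qed.

Lemma card_ffun_agree_on (aT rT : finType) (D : {pred aT}) (f0 : {ffun aT -> rT}) :
  #|[set f : {ffun aT -> rT} | [forall t in D, f t == f0 t]]| = #|rT| ^ #|[predC D]|.
Proof.
pose F t := if t \in D then pred1 (f0 t) else predT.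
rewrite (eq_card (B := family F)); last first.
  move=> f; rewrite !inE; apply/forall_inP/familyP => [fD t | fF t tD].
    by rewrite /F; case: ifP => // /fD.
  by have := fF t; rewrite /F tD.
rewrite card_family foldrE big_map big_enum /= -prod_nat_const [RHS]big_mkcond /=.
by apply: eq_bigr => t _; rewrite /F !inE; case: (t \in D); rewrite ?card1 ?cardT.
Qed.

Lemma digits_inj q s m m' : 0 < q -> m < q ^ s -> m' < q ^ s ->
  (forall t, t < s -> m %/ q ^ t %% q = m' %/ q ^ t %% q) -> m = m'.
Proof.
move=> q_gt0; elim: s m m' => [|s IHs] m m'.
  by rewrite expn0 !ltnS !leqn0 => /eqP -> /eqP ->.
move=> m_lt m'_lt eq_digits.
have := eq_digits 0 isT; rewrite expn0 !divn1 => eq_mod.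
suff eq_div : m %/ q = m' %/ q by rewrite (divn_eq m q) (divn_eq m' q) eq_div eq_mod.
apply: IHs; rewrite ?ltn_divLR -?expnSr // => t t_lt.
by rewrite -!divnMA -expnS eq_digits.
Qed.

Lemma card_set_sum (T : finType) (P : pred T) : #|[set t | P t]| = \sum_t P t.
Proof. by rewrite -sum1dep_card big_mkcond. Qed.

Local Open Scope ring_scope.

Lemma mulr_expr_sum_nilpotent (R : comPzSemiRingType) (g : R) s j (a : nat -> R) :
  g ^+ s = 0 ->
  g ^+ j * \sum_(i < s) a i * g ^+ i = \sum_(i < s | (j <= i)%N) a (i - j)%N * g ^+ i.
Proof.
move=> g_nil.
transitivity (\sum_(0 + j <= i < s) a (i - j)%N * g ^+ i); last first.
  by rewrite big_geq_mkord; apply: eq_bigl.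
rewrite big_addn mulr_sumr.
rewrite (eq_bigr (fun i : 'I_s => a i * g ^+ (i + j))); last first.
  by move=> i _; rewrite mulrCA -exprD addnC.
rewrite -(big_mkord xpredT (fun i => a i * g ^+ (i + j))).
rewrite (@big_cat_nat _ _ _ (s - j)) ?leq_subr //=.
rewrite [X in _ + X]big_nat_cond [X in _ + X]big1 ?addr0; last first.
  move=> i /andP[/andP[le_i _] _]; rewrite leq_subLR addnC in le_i.
  by rewrite -(subnKC le_i) exprD g_nil mul0r mulr0.
by apply: eq_bigr => i _; rewrite addnK.
Qed.

Section Expansion.
Variables (R : finComNzRingType) (g : R) (s q : nat) (e : nat -> R).
Hypothesis q_gt0 : (0 < q)%N.

Definition expansion (d : {ffun 'I_s -> 'I_q}) : R := \sum_(i < s) e (d i) * g ^+ i.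

Definition digits (m : 'I_(q ^ s)) : {ffun 'I_s -> 'I_q} :=
  [ffun t : 'I_s => Ordinal (ltn_pmod (m %/ q ^ t) q_gt0)].

Lemma digits_bij : bijective digits.
Proof.
apply: inj_card_bij; last by rewrite card_ffun !card_ord.
move=> m m' /ffunP eq_digits; apply: val_inj.
apply: (digits_inj q_gt0 (ltn_ord m) (ltn_ord m')) => t lt_ts.
by have /(congr1 val) := eq_digits (Ordinal lt_ts); rewrite !ffunE.
Qed.

Lemma sum_rho (F : R -> nat) :
  (\sum_(m < q ^ s) F (rho g s q e m) = \sum_d F (expansion d))%N.
Proof.
rewrite (reindex digits) /=; last exact: onW_bij digits_bij.
by apply: eq_bigr => m _; congr F; apply: eq_bigr => t _; rewrite ffunE.
Qed.

Lemma sum_Gent_row (F : R -> nat) k i : (i < k)%N ->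
  (\sum_(c < q ^ (s * k)) F (Gent g s q e k i c)
   = q ^ (s * (k - 1)) * \sum_(m < q ^ s) F (rho g s q e m))%N.
Proof.
elim: k i => [//|k IHk] [|i] lt_ik;
  rewrite mulnS expnD (big_ord_mul _ (fun c => F (Gent g s q e k.+1 _ c))) subn1 /=.
  rewrite big_distrr; apply: eq_bigr => u _ /=.
  rewrite (eq_bigr (fun=> F (rho g s q e u))) ?sum_nat_const ?card_ord // => v _.
  by rewrite divnMDl ?expn_gt0 ?q_gt0 // divn_small // addn0.
rewrite (eq_bigr (fun=> q ^ (s * (k - 1)) * \sum_(m < q ^ s) F (rho g s q e m)))%N.
  rewrite sum_nat_const card_ord mulnA -expnD.
  by case: k lt_ik {IHk} => // k _; rewrite subn1 -mulnS.
move=> u _; rewrite -(IHk i) //; apply: eq_bigr => v _.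
by rewrite modnMDl modn_small.
Qed.

Variable j : nat.

Definition shift_digits (d : {ffun 'I_s -> 'I_q}) : {ffun 'I_s -> 'I_q} :=
  [ffun i : 'I_s => if (j <= i)%N then d (insubd i (i - j)%N) else Ordinal q_gt0].

Lemma shift_digits_eq d d' : (shift_digits d == shift_digits d') =
  [forall t in [pred t : 'I_s | (t < s - j)%N], d t == d' t].
Proof.
apply/eqP/forall_inP => [eq_shift t lt_t | eq_low].
  have lt_tj : (t + j < s)%N by rewrite addnC -ltn_subRL.
  have shifted_t : insubd (Ordinal lt_tj) (t + j - j)%N = t.
    by apply: val_inj; rewrite val_insubd addnK ltn_ord.
  have := congr1 (fun f : {ffun 'I_s -> 'I_q} => f (Ordinal lt_tj)) eq_shift.
  by rewrite !ffunE /= leq_addl shifted_t => ->.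
apply/ffunP => i; rewrite !ffunE; case: ifP => // le_ji; apply/eqP/eq_low.
rewrite inE val_insubd (leq_ltn_trans (leq_subr j i)) //.
by rewrite ltn_sub2r // (leq_ltn_trans le_ji).
Qed.

Hypotheses (g_nil : g ^+ s = 0) (e0 : e 0 = 0).

Lemma expansion_shift_digits d : expansion (shift_digits d) = g ^+ j * expansion d.
Proof.
pose a t := if insub t is Some i then e (d i) else 0.
have a_ord (i : 'I_s) : a i = e (d i) by rewrite /a valK.
have -> : expansion d = \sum_(i < s) a i * g ^+ i.
  by apply: eq_bigr => i _; rewrite a_ord.
rewrite mulr_expr_sum_nilpotent // /expansion [RHS]big_mkcond /=.
apply: eq_bigr => i _; rewrite ffunE; case: ifP => le_ji; last by rewrite e0 mul0r.
by rewrite -a_ord val_insubd (leq_ltn_trans (leq_subr j i)).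
Qed.

Hypothesis expansion_unique : forall r : R, exists! d : {ffun 'I_s -> 'I_q},
  r = \sum_(i < s) e (d i) * g ^+ i.

Lemma expansion_inj : injective expansion.
Proof.
move=> d d' eq_dd'; have [d0 [_ d0_uniq]] := expansion_unique (expansion d).
by rewrite -(d0_uniq d) // (d0_uniq d') // eq_dd'.
Qed.

Lemma card_mul_expansion x : (j <= s)%N -> x \in pideal (g ^+ j) ->
  #|[set d | g ^+ j * expansion d == x]| = (q ^ j)%N.
Proof.
move=> le_js /imsetP[y _ ->]; have [dy [-> _]] := expansion_unique y.
pose low := [pred t : 'I_s | (t < s - j)%N].
have -> : [set d | g ^+ j * expansion d == g ^+ j * expansion dy]
        = [set d : {ffun 'I_s -> 'I_q} | [forall t in low, d t == dy t]].
  apply/setP => d; rewrite !inE -!expansion_shift_digits.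
  by rewrite (inj_eq expansion_inj) shift_digits_eq.
rewrite card_ffun_agree_on card_ord -(subKn le_js) -card_ord_geq.
by congr (_ ^ _)%N; apply: eq_card => t; rewrite !inE -leqNgt.
Qed.
End Expansion.

Theorem lemma3p6 (R : finComNzRingType) (gamma : R) (s q : nat) (e : nat -> R)
  (Hchain : chain_ring R)
  (Hmax : maximal_ideal (pideal gamma))
  (Hnil : nilpotency_index gamma s)
  (Hreps : coset_reps gamma q e)
  (He0 : e 0%N = 0) (He1 : e 1%N = 1)
  (Hexp : forall r : R, exists! d : {ffun 'I_s -> 'I_q},
            r = \sum_(i < s) e (d i) * gamma ^+ i)
  (k : nat) (Hk : (1 <= k)%N) (i : 'I_k) (j : nat) (Hj : (j < s)%N) :
  forall x : R, x \in pideal (gamma ^+ j) ->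
    #|[set c : 'I_(q ^ (s * k)) | gamma ^+ j * Galpha gamma s q e k i c == x]|
      = (q ^ (j + s * (k - 1)))%N.
Proof.
move=> x x_in.
have q_gt0 : (0 < q)%N.
  by have [d _] := Hexp 0; apply: leq_ltn_trans (ltn_ord (d (Ordinal Hj))).
have gamma_nil : gamma ^+ s = 0 by case: Hnil.
pose F r := (gamma ^+ j * r == x : nat).
rewrite card_set_sum (eq_bigr (fun c : 'I__ => F (Gent gamma s q e k i c))); last first.
  by move=> c _; rewrite mxE.
rewrite sum_Gent_row // sum_rho // -card_set_sum.
by rewrite card_mul_expansion ?(ltnW Hj) // mulnC expnD.
Qed.
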